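(* Assume each $f_m^j$ is $L$-smooth. In the setting described in the context, for every meta-epoch $t$, round $r\in\{0,\dots,R-1\}$, client $m\in S_t^{\lambda_r}$ and $j\in\{0,\dots,N-1\}$: $$\sigma^2_{m,\mathrm{DS}}(t,r,j)\le L\Big(\frac{MN^2}{2C^2}+2N^2\Big)\tilde\sigma_\star^2+\frac{LN}{2}\sigma_\star^2.$$ Moreover, for every $m$ and $r$, $$\sigma^2_{m,\mathrm{CS}}(r)\le\frac{LM}{2C^2}\tilde\sigma_\star^2.$$
   Context: Setting. There are $M$ clients, each holding $N$ data points. For $m\in[M]$ and $j\in\{0,\dots,N-1\}$, $f_m^j:\mathbb{R}^d\to\mathbb{R}$ is differentiable. Define $f_m=\frac1N\sum_j f_m^j$ and $f=\frac1M\sum_m f_m$, and let $x_\star$ be a minimizer of $f$. A function is $L$-smooth if its gradient is $L$-Lipschitz. The Bregman divergence is $D_h(x,y)=h(x)-h(y)-\langle\nabla h(y),x-y\rangle$. Define $\tilde\sigma_\star^2=\frac1M\sum_m\|\nabla f_m(x_\star)\|^2$ and $\sigma_\star^2=\frac1{MN}\sum_{m,j}\|\nabla f_m^j(x_\star)\|^2$. Let $\gamma,\eta>0$ and let $C$ be a cohort size with $M=CR$. Random sampling. In meta-epoch $t$, the clients are partitioned uniformly at random into $R$ disjoint cohorts of size $C$, taken in a uniformly random order $S_t^{\lambda_0},\dots,S_t^{\lambda_{R-1}}$. Each client $m$ has an independent uniformly random permutation $\pi_m=(\pi_m^0,\dots,\pi_m^{N-1})$ of its data indices. Data-level star sequence.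 Set $x^0_\star=x_\star$. For $m\in S_t^{\lambda_r}$, set $x^{r,0}_{m,\star}=x^r_\star$, $x^{r,j+1}_{m,\star}=x^{r,j}_{m,\star}-\gamma\nabla f_m^{\pi_m^j}(x_\star)$, and $x^{r+1}_\star=\frac1C\sum_{m\in S_t^{\lambda_r}}x^{r,N}_{m,\star}$. Define $\sigma^2_{m,\mathrm{DS}}(t,r,j)=\frac1{\gamma^2}\mathbb{E}[D_{f_m^{\pi_m^j}}(x^{r,j}_{m,\star},x_\star)]$. Client-level star sequence. Set $y^0_\star=x_\star$ and $y^{r+1}_\star=y^r_\star-\eta\frac1C\sum_{m\in S_t^{\lambda_r}}\nabla f_m(x_\star)$. Define $\sigma^2_{m,\mathrm{CS}}(r)=\frac1{\eta^2}\mathbb{E}[D_{f_m}(y^r_\star,x_\star)]$. *)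

From HB Require Import structures.
From mathcomp Require Import all_boot all_order all_algebra all_fingroup.
From mathcomp Require Import all_classical all_reals all_analysis.
Set Implicit Arguments. Unset Strict Implicit. Unset Printing Implicit Defensive.
Import Order.TTheory GRing.Theory Num.Theory.
Import numFieldNormedType.Exports.
Local Open Scope ring_scope.

Section Defs.
Variables (K : realType) (d : nat).
Local Notation vec := 'rV[K]_d.

Definition dotv (u v : vec) : K := \sum_(i < d) u 0 i * v 0 i.
Definition sqnorm (v : vec) : K := dotv v v.
Definition enorm (v : vec) : K := Num.sqrt (sqnorm v).

Definition grad (h : vec -> K) (x : vec) : vec :=
  \row_(i < d) ('d h x) (delta_mx 0 i).

Definition Lsmooth (L : K) (h : vec -> K) : Prop :=
  (forall x, differentiable h x) /\
  (forall x y, enorm (grad h x - grad h y) <= L * enorm (x - y)).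

Definition bregman (h : vec -> K) (x y : vec) : K :=
  h x - h y - dotv (grad h y) (x - y).

Definition Eunif (T : finType) (X : T -> K) : K :=
  (#|T|%:R)^-1 * \sum_(w : T) X w.

End Defs.

Lemma slot_lt (C R : nat) (r : 'I_R) (s : 'I_C) : (r * C + s < C * R)%N.
Proof.
have hr := ltn_ord r; have hs := ltn_ord s.
have h1 : (r * C + s < r * C + C)%N by rewrite ltn_add2l.
apply: (leq_trans h1); rewrite -mulSnr mulnC leq_mul2l; apply/orP; right; exact: hr.
Qed.

(* slot s of cohort r in the flattened enumeration 0..CR-1 *)
Definition slot (C R : nat) (r : 'I_R) (s : 'I_C) : 'I_(C * R) :=
  Ordinal (slot_lt r s).

Section Sampling.
Variables (K : realType) (d N C R : nat).
Local Notation vec := 'rV[K]_d.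
Local Notation M := (C * R)%N.

(* Sample space of one meta-epoch:
   - a uniformly random permutation [sigma] of the M clients; cohort in
     round r (i.e. S_t^{lambda_r}) is {sigma (r*C + s) | s < C}.  The induced
     law of the ordered partition (S^{lambda_0},...,S^{lambda_{R-1}}) is the
     uniform law on partitions into R cohorts of size C in uniform order;
   - independent uniformly random data permutations pi_m, one per client. *)
Definition Omega : finType :=
  prod {perm 'I_M} {ffun 'I_M -> {perm 'I_N}}.

Definition cohort (w : Omega) (r : 'I_R) (s : 'I_C) : 'I_M := w.1 (slot r s).
Definition dperm (w : Omega) (m : 'I_M) : {perm 'I_N} := w.2 m.

Variables (F : 'I_M -> 'I_N -> vec -> K) (xs : vec) (gamma eta : K).

Definition fm (m : 'I_M) : vec -> K := fun x => (N%:R)^-1 * \sum_(j < N) F m j x.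
Definition ftot : vec -> K := fun x => (M%:R)^-1 * \sum_(m < M) fm m x.

(* data-level star sequence: x^{r,j}_{m,*} (closed form of the recursion
   x^{r,j+1} = x^{r,j} - gamma grad f_m^{pi_m^j}(x_* ), x^{r,0} = x^r) *)
Definition x_inner (w : Omega) (xr : vec) (m : 'I_M) (j : nat) : vec :=
  xr - gamma *: \sum_(k < N | (k < j)%N) grad (F m (dperm w m k)) xs.

Fixpoint x_round (w : Omega) (r : nat) : vec :=
  match r with
  | 0 => xs
  | r'.+1 =>
      let xr := x_round w r' in
      match (insub r' : option 'I_R) with
      | Some o => (C%:R)^-1 *: \sum_(s < C) x_inner w xr (cohort w o s) N
      | None => xr
      end
  end.

Fixpoint y_round (w : Omega) (r : nat) : vec :=
  match r with
  | 0 => xs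
  | r'.+1 =>
      let yr := y_round w r' in
      match (insub r' : option 'I_R) with
      | Some o => yr - eta *: ((C%:R)^-1 *: \sum_(s < C) grad (fm (cohort w o s)) xs)
      | None => yr
      end
  end.

(* sigma^2_{m,DS}(t,r,j) for the client m occupying slot s of cohort
   S_t^{lambda_r} *)
Definition sigmaDS (r : 'I_R) (s : 'I_C) (j : 'I_N) : K :=
  (gamma ^+ 2)^-1 *
  Eunif (fun w : Omega =>
     let m := cohort w r s in
     bregman (F m (dperm w m j)) (x_inner w (x_round w r) m j) xs).

Definition sigmaCS (m : 'I_M) (r : nat) : K :=
  (eta ^+ 2)^-1 * Eunif (fun w : Omega => bregman (fm m) (y_round w r) xs).

Definition sigt2 : K := (M%:R)^-1 * \sum_(m < M) sqnorm (grad (fm m) xs).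
Definition sigs2 : K :=
  ((M * N)%:R)^-1 * \sum_(m < M) \sum_(j < N) sqnorm (grad (F m j) xs).

End Sampling.

(* Both star sequences leave x_* only through prefix sums of gradients at x_*.
   Unrolling the rounds, x^r_* = x_* - (gamma N / C) S_r and
   y^r_* = x_* - (eta / C) S_r, where S_r sums grad f_m(x_* ) over the clients
   of the first r cohorts, i.e. over the first rC positions of a uniformly
   random order of the clients; inside a client, x^{r,j}_{m,*} moves further by
   -gamma times the sum of the first j data gradients in a random order.
   By smoothness every Bregman divergence is at most L/2 times a squared
   distance, so everything reduces to second moments of partial sums of a
   random permutation of vectors v_1, ..., v_n: for k of them sampled without
   replacement, E |sum|^2 = k(n-k)/(n(n-1)) sum |v_i|^2 + k(k-1)/(n(n-1)) |sum v_i|^2,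
   which is at most sum |v_i|^2 / 2 + |sum v_i|^2. Optimality of x_* makes the
   client gradients sum to zero, which kills the second term for S_r. *)

From HB Require Import structures.
From mathcomp Require Import all_boot all_order all_algebra all_fingroup.
From mathcomp Require Import all_classical all_reals all_analysis.
From mathcomp Require Import ring lra zify.
Import Order.TTheory GRing.Theory Num.Theory.
Import numFieldNormedType.Exports.
Set Implicit Arguments. Unset Strict Implicit. Unset Printing Implicit Defensive.
Local Open Scope ring_scope.

Section InnerProduct.
Variables (K : realType) (d : nat).
Local Notation vec := 'rV[K]_d.
Implicit Types (u v w : vec) (a : K).

Lemma dotvC u v : dotv u v = dotv v u.
Proof. by apply: eq_bigr => i _; rewrite mulrC. Qed.

Lemma dotvDl u v w : dotv (u + v) w = dotv u w + dotv v w.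
Proof. by rewrite /dotv -big_split; apply: eq_bigr => i _; rewrite mxE mulrDl. Qed.

Lemma dotvZl a u v : dotv (a *: u) v = a * dotv u v.
Proof. by rewrite /dotv mulr_sumr; apply: eq_bigr => i _; rewrite mxE mulrA. Qed.

Lemma dotvNl u v : dotv (- u) v = - dotv u v.
Proof. by rewrite -scaleN1r dotvZl mulN1r. Qed.

Lemma dotvBl u v w : dotv (u - v) w = dotv u w - dotv v w.
Proof. by rewrite dotvDl dotvNl. Qed.

Lemma dotvDr u v w : dotv u (v + w) = dotv u v + dotv u w.
Proof. by rewrite !(dotvC u) dotvDl. Qed.

Lemma dotvZr a u v : dotv u (a *: v) = a * dotv u v.
Proof. by rewrite !(dotvC u) dotvZl. Qed.

Lemma dotvBr u v w : dotv u (v - w) = dotv u v - dotv u w.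
Proof. by rewrite !(dotvC u) dotvBl. Qed.

Lemma dotv0l v : dotv 0 v = 0.
Proof. by rewrite -(scale0r 0) dotvZl mul0r. Qed.

Lemma dotv_suml (I : Type) (r : seq I) (P : pred I) (F : I -> vec) v :
  dotv (\sum_(i <- r | P i) F i) v = \sum_(i <- r | P i) dotv (F i) v.
Proof. by elim/big_rec2: _ => [|i y1 y2 _ <-]; rewrite ?dotv0l ?dotvDl. Qed.

Lemma dotv_sumr (I : Type) (r : seq I) (P : pred I) (F : I -> vec) u :
  dotv u (\sum_(i <- r | P i) F i) = \sum_(i <- r | P i) dotv u (F i).
Proof. by rewrite dotvC dotv_suml; apply: eq_bigr => i _; rewrite dotvC. Qed.

Lemma sqnorm_ge0 v : 0 <= sqnorm v.
Proof. by apply: sumr_ge0 => i _; rewrite -expr2 sqr_ge0. Qed.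

Lemma sqnorm_eq0 v : sqnorm v = 0 -> v = 0.
Proof.
move=> /eqP; rewrite psumr_eq0 => [/allP v0|i _]; last by rewrite -expr2 sqr_ge0.
apply/rowP => i; rewrite mxE; apply/eqP.
by rewrite -sqrf_eq0 expr2; apply: v0; rewrite mem_index_enum.
Qed.

Lemma sqnorm0 : sqnorm (0 : vec) = 0.
Proof. exact: dotv0l. Qed.

Lemma sqnormN v : sqnorm (- v) = sqnorm v.
Proof. by rewrite /sqnorm dotvNl dotvC dotvNl opprK. Qed.

Lemma sqnormZ a v : sqnorm (a *: v) = a ^+ 2 * sqnorm v.
Proof. by rewrite /sqnorm dotvZl dotvZr mulrA expr2. Qed.

Lemma sqnormD_le u v : sqnorm (u + v) <= 2 * sqnorm u + 2 * sqnorm v.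
Proof.
have := sqnorm_ge0 (u - v).
rewrite /sqnorm !dotvBl !dotvBr !dotvDl !dotvDr (dotvC v u); lra.
Qed.

Lemma sqnormBZ u v a :
  sqnorm (u - a *: v) = sqnorm u - 2 * a * dotv u v + a ^+ 2 * sqnorm v.
Proof. by rewrite /sqnorm dotvBl !dotvBr !dotvZl !dotvZr (dotvC v u); ring. Qed.

Lemma cauchy_schwarz u v : dotv u v ^+ 2 <= sqnorm u * sqnorm v.
Proof.
have [/sqnorm_eq0 ->|v0] := eqVneq (sqnorm v) 0.
  by rewrite dotvC dotv0l sqnorm0 expr0n mulr0.
set c := dotv u v / sqnorm v.
have := sqnorm_ge0 (u - c *: v); rewrite sqnormBZ => res_ge0.
rewrite -subr_ge0; have -> : sqnorm u * sqnorm v - dotv u v ^+ 2 =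
   (sqnorm u - 2 * c * dotv u v + c ^+ 2 * sqnorm v) * sqnorm v by rewrite /c; field.
exact: mulr_ge0 res_ge0 (sqnorm_ge0 v).
Qed.

Lemma sqnorm_enorm v : sqnorm v = enorm v ^+ 2.
Proof. by rewrite /enorm sqr_sqrtr // sqnorm_ge0. Qed.

Lemma enorm_ge0 v : 0 <= enorm v.
Proof. exact: sqrtr_ge0. Qed.

Lemma enormZ a v : 0 <= a -> enorm (a *: v) = a * enorm v.
Proof. by move=> a0; rewrite /enorm sqnormZ sqrtrM ?sqr_ge0 // sqrtr_sqr ger0_norm. Qed.

Lemma dotv_le_enorm u v : dotv u v <= enorm u * enorm v.
Proof.
rewrite /enorm -sqrtrM ?sqnorm_ge0 // (le_trans (ler_norm _)) //.
by rewrite -sqrtr_sqr ler_sqrt ?cauchy_schwarz // mulr_ge0 ?sqnorm_ge0.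
Qed.

End InnerProduct.

Lemma descent_real (K : realType) (f df : K -> K) (a : K) :
  (forall t : K, is_derive t 1 f (df t)) -> (forall t, 0 <= t -> df t - df 0 <= a * t) ->
  f 1 - f 0 - df 0 <= a / 2.
Proof.
move=> f' df_le.
pose psi := f - df 0 \*: id - (a / 2) \*: (id * id).
have psi' (t : K) : is_derive t 1 psi (df t - df 0 *: 1 - a / 2 *: (t *: 1 + t *: 1)).
  by apply: is_deriveB; apply: is_deriveB.
have psi_cont : {within `[0, 1], continuous psi}%classic.
  by apply: derivable_within_continuous => t _; exact: (@ex_derive _ _ _ _ _ _ _ (psi' t)).
have [t /[!in_itv] /= /andP[t0 _]] := MVT_segment ler01 (fun t _ => psi' t) psi_cont.
have -> : psi 1 - psi 0 = f 1 - df 0 * 1 - a / 2 * (1 * 1) - (f 0 - df 0 * 0 - a / 2 * (0 * 0)).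
  by [].
have := df_le t t0; rewrite /GRing.scale /=; lra.
Qed.

Section Smoothness.
Variables (K : realType) (d : nat).
Local Notation vec := 'rV[K]_d.
Implicit Types (h : vec -> K) (x y u : vec).

Lemma diff_dotv_grad h z u : 'd h z u = dotv (grad h z) u.
Proof.
rewrite /dotv {1}(row_sum_delta u) linear_sum; apply: eq_bigr => i _.
by rewrite linearZ /= mxE mulrC.
Qed.

Lemma is_derive_along_line h u y (t : K) : (forall x, differentiable h x) ->
  is_derive t 1 (fun s : K => h (s *: u + y)) (dotv (grad h (t *: u + y)) u).
Proof.
move=> dh; pose l : K -> vec := ( *:%R^~ u) + cst y.
have dl : differentiable l t by apply: ex_diff; apply: is_diffD.
apply: DeriveDef; first by apply: diff_derivable; apply: differentiable_comp.
rewrite deriveE; last by apply: differentiable_comp.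
rewrite diff_comp // /= -diff_dotv_grad; congr ('d h _ _).
by rewrite diff_val /= addr0 scale1r.
Qed.

Lemma bregman_le_sqnorm L h x y :
  Lsmooth L h -> bregman h x y <= L / 2 * sqnorm (x - y).
Proof.
move=> [dh hL].
have := descent_real (a := L * sqnorm (x - y)) (fun t => is_derive_along_line (x - y) y t dh).
rewrite !scale0r !scale1r !add0r subrK mulrAC; apply.
move=> t t0; rewrite -dotvBl.
apply: (le_trans (dotv_le_enorm _ _)).
rewrite [leRHS](_ : _ = L * (t * enorm (x - y)) * enorm (x - y)); last first.
  by rewrite sqnorm_enorm; ring.
apply: ler_wpM2r; first exact: enorm_ge0.
by have := hL (t *: (x - y) + y) y; rewrite addrK enormZ.
Qed.

Lemma grad_eq0_at_min h x :
  (forall z, differentiable h z) -> (forall y, h x <= h y) -> grad h x = 0.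
Proof.
move=> dh hmin; set v := grad h x.
have line' t := is_derive_along_line v x t dh.
have line'0 : is_derive (0 : K) 1 (fun s : K => h (s *: v + x)) 0.
  apply: (@derive1_at_min _ _ (-1) 1); rewrite ?in_itv /= ?ltrN10 ?ltr01 //.
  by move=> t _; rewrite scale0r add0r.
apply: sqnorm_eq0.
have := @derive_val _ _ _ _ _ _ _ (line' 0).
by rewrite (@derive_val _ _ _ _ _ _ _ line'0) scale0r add0r => /esym.
Qed.

Lemma Lsmooth_neg_trivial L h : Lsmooth L h -> L < 0 -> forall v : vec, v = 0.
Proof.
move=> [_ hL] L0 v; apply: sqnorm_eq0; apply/eqP.
have := le_trans (enorm_ge0 _) (hL v 0); rewrite subr0 nmulr_rge0 // => v_le0.
by rewrite sqnorm_enorm sqrf_eq0 eq_le v_le0 enorm_ge0.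
Qed.

Lemma Lsmooth0_of_neg L h : Lsmooth L h -> L < 0 -> Lsmooth 0 h.
Proof.
move=> hL L_lt0; have vanish := Lsmooth_neg_trivial hL L_lt0.
case: hL => dh _; split=> // x y.
by rewrite mul0r (vanish (grad h x - grad h y)) /enorm sqnorm0 sqrtr0.
Qed.

Section ScaledSum.
Variables (n : nat) (G : 'I_n -> vec -> K) (c : K) (z : vec).
Hypothesis dG : forall j, differentiable (G j) z.

Let scaled_sumE : (fun x => c * \sum_j G j x) = c *: \sum_j G j.
Proof. by apply/funext => x; rewrite /= fct_sumE. Qed.

Lemma differentiable_scaled_sum : differentiable (fun x => c * \sum_j G j x) z.
Proof. by rewrite scaled_sumE; apply: differentiableZ; exact: differentiable_sum. Qed.

Lemma grad_scaled_sum : grad (fun x => c * \sum_j G j x) z = c *: \sum_j grad (G j) z.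
Proof.
have dsum := differentiable_sum dG.
apply/rowP => i; rewrite scaled_sumE !mxE diffZ //= -deriveE // derive_sum.
  by rewrite summxE; congr (_ * _); apply: eq_bigr => j _; rewrite mxE deriveE.
by move=> j; apply: diff_derivable.
Qed.

Lemma bregman_scaled_sum x :
  bregman (fun x => c * \sum_j G j x) x z = c * \sum_j bregman (G j) x z.
Proof.
rewrite /bregman grad_scaled_sum dotvZl dotv_suml !mulr_sumr -!sumrB.
by apply: eq_bigr => j _; rewrite !mulrBr.
Qed.

End ScaledSum.

End Smoothness.

Lemma sum_perm_eval (V : nmodType) n (h : 'I_n -> V) i :
  (\sum_(p : {perm 'I_n}) h (p i)) *+ n = (\sum_k h k) *+ #|{perm 'I_n}|.
Proof.
have indep k : \sum_(p : {perm 'I_n}) h (p i) = \sum_(p : {perm 'I_n}) h (p k).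
  rewrite (reindex_inj (mulgI (tperm i k))); apply: eq_bigr => p _.
  by rewrite permM tpermL.
rewrite -[n in _ *+ n]card_ord -sumr_const (eq_bigr _ (fun k _ => indep k)).
rewrite exchange_big -sumr_const; apply: eq_bigr => p _.
by rewrite [RHS](reindex_inj (@perm_inj _ p)).
Qed.

Lemma sum_ffun_eval (V : nmodType) (I : finType) (G : finGroupType) (h : G -> V) i :
  (\sum_(f : {ffun I -> G}) h (f i)) *+ #|G| = (\sum_g h g) *+ #|{ffun I -> G}|.
Proof.
have indep t : \sum_(f : {ffun I -> G}) h (f i) = \sum_(f : {ffun I -> G}) h (t * f i)%g.
  pose tr (f : {ffun I -> G}) := [ffun m => if m == i then (t * f m)%g else f m].
  have tr_inj : injective tr.
    move=> f1 f2 /ffunP e; apply/ffunP => m; have := e m.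
    by rewrite !ffunE; case: (m == i) => //; apply: mulgI.
  by rewrite (reindex_inj tr_inj); apply: eq_bigr => f _; rewrite ffunE eqxx.
rewrite -sumr_const (eq_bigr _ (fun t _ => indep t)) exchange_big -sumr_const.
by apply: eq_bigr => f _; rewrite [RHS](reindex_inj (mulIg (f i))).
Qed.

Section UniformExpectation.
Variable K : realType.
Implicit Types T : finType.

Lemma eq_Eunif T (X Y : T -> K) : X =1 Y -> Eunif X = Eunif Y.
Proof. by move=> XY; rewrite /Eunif (eq_bigr _ (fun w _ => XY w)). Qed.

Lemma ler_Eunif T (X Y : T -> K) : (forall w, X w <= Y w) -> Eunif X <= Eunif Y.
Proof. by move=> XY; rewrite ler_wpM2l ?invr_ge0 // ler_sum. Qed.

Lemma EunifD T (X Y : T -> K) : Eunif (fun w => X w + Y w) = Eunif X + Eunif Y.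
Proof. by rewrite /Eunif big_split mulrDr. Qed.

Lemma EunifZ T (a : K) (X : T -> K) : Eunif (fun w => a * X w) = a * Eunif X.
Proof. by rewrite /Eunif -mulr_sumr mulrCA. Qed.

Lemma Eunif_cst T (c : K) : (0 < #|T|)%N -> Eunif (fun _ : T => c) = c.
Proof. by move=> T0; rewrite /Eunif sumr_const -[c *+ _]mulr_natl mulKf // pnatr_eq0 -lt0n. Qed.

Lemma Eunif_pair T1 T2 (X : T1 * T2 -> K) :
  Eunif X = Eunif (fun a => Eunif (fun b => X (a, b))).
Proof.
rewrite /Eunif card_prod natrM invfM -mulrA -mulr_sumr pair_big.
by congr (_ * (_ * _)); apply: eq_bigr => -[].
Qed.

Lemma Eunif_fst T1 T2 (X : T1 -> K) :
  (0 < #|T2|)%N -> Eunif (fun w : T1 * T2 => X w.1) = Eunif X.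
Proof. by move=> T2_gt0; rewrite Eunif_pair; apply: eq_Eunif => a; rewrite /= Eunif_cst. Qed.

Lemma Eunif_perm_eval n (h : 'I_n -> K) i :
  Eunif (fun p : {perm 'I_n} => h (p i)) = n%:R^-1 * \sum_k h k.
Proof.
have n_gt0 : (0 < n)%N by apply: leq_ltn_trans (ltn_ord i).
have perm_gt0 : (0 < #|{perm 'I_n}|)%N by apply/card_gt0P; exists 1%g.
have e := sum_perm_eval h i; rewrite -[LHS]mulr_natl -[RHS]mulr_natl in e.
rewrite /Eunif.
apply: (mulfI (x := n%:R * #|{perm 'I_n}|%:R)); first by rewrite mulf_neq0 // pnatr_eq0 -lt0n.
by rewrite -mulrA mulVKf ?pnatr_eq0 -?lt0n // e; field; rewrite pnatr_eq0 -lt0n.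
Qed.

Lemma Eunif_ffun_eval (I : finType) (G : finGroupType) (h : G -> K) i :
  Eunif (fun f : {ffun I -> G} => h (f i)) = Eunif h.
Proof.
have G_gt0 : (0 < #|G|)%N by apply/card_gt0P; exists 1%g.
have ffun_gt0 : (0 < #|{ffun I -> G}|)%N by apply/card_gt0P; exists [ffun=> 1%g].
have e := sum_ffun_eval h i; rewrite -[LHS]mulr_natl -[RHS]mulr_natl in e.
rewrite /Eunif.
apply: (mulfI (x := #|{ffun I -> G}|%:R * #|G|%:R)); first by rewrite mulf_neq0 // pnatr_eq0 -lt0n.
by rewrite [LHS]mulrAC mulVKf ?pnatr_eq0 -?lt0n // mulrC e; field; rewrite pnatr_eq0 -lt0n.
Qed.

End UniformExpectation.

Section SamplingWithoutReplacement.
Variables (K : realType) (d n : nat) (v : 'I_n -> 'rV[K]_d).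
Local Notation nperm := (#|{perm 'I_n}|%:R : K).

Definition perm_cov (k k' : 'I_n) : K :=
  \sum_(p : {perm 'I_n}) dotv (v (p k)) (v (p k')).

Lemma perm_cov_diag k : n%:R * perm_cov k k = nperm * \sum_k sqnorm (v k).
Proof. by rewrite !mulr_natl; exact: (sum_perm_eval (fun k => sqnorm (v k))). Qed.

Lemma perm_cov_sym k k1 k2 : k1 != k -> k2 != k -> perm_cov k k1 = perm_cov k k2.
Proof.
move=> k1k k2k; rewrite /perm_cov (reindex_inj (mulgI (tperm k1 k2))).
by apply: eq_bigr => p _; rewrite !permM tpermL tpermD // eq_sym.
Qed.

Lemma perm_cov_rowsum k :
  n%:R * \sum_k' perm_cov k k' = nperm * sqnorm (\sum_k v k).
Proof.
have -> : \sum_k' perm_cov k k' = \sum_(p : {perm 'I_n}) dotv (v (p k)) (\sum_k v k).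
  rewrite exchange_big; apply: eq_bigr => p _.
  by rewrite dotv_sumr [in RHS](reindex_inj (@perm_inj _ p)).
rewrite !mulr_natl (sum_perm_eval (fun k => dotv (v k) (\sum_k v k))).
by rewrite -dotv_suml.
Qed.

Lemma perm_cov_offdiag k k' : k' != k ->
  n%:R * (n%:R - 1) * perm_cov k k' =
  nperm * (sqnorm (\sum_k v k) - \sum_k sqnorm (v k)).
Proof.
move=> k'k; have n_gt0 : (0 < n)%N by apply: leq_ltn_trans (ltn_ord k).
have := perm_cov_diag k; have := perm_cov_rowsum k.
rewrite (bigD1 k) //= (eq_bigr (fun _ => perm_cov k k')); last first.
  by move=> j jk; apply: perm_cov_sym.
rewrite sumr_const.
have -> : #|(fun j : 'I_n => j != k)| = n.-1 by rewrite -[n in RHS]card_ord -(cardC1 k).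
rewrite -[perm_cov k k' *+ _]mulr_natl -subn1 natrB // => rowsum diag.
by rewrite [RHS]mulrBr -rowsum -diag; ring.
Qed.

Lemma sum_perm_sqnorm_subset (P : pred 'I_n) :
  n%:R * (n%:R - 1) * \sum_(p : {perm 'I_n}) sqnorm (\sum_(k | P k) v (p k)) =
  nperm * (#|P|%:R * (n%:R - #|P|%:R) * \sum_k sqnorm (v k)
           + #|P|%:R * (#|P|%:R - 1) * sqnorm (\sum_k v k)).
Proof.
have -> : \sum_(p : {perm 'I_n}) sqnorm (\sum_(k | P k) v (p k)) =
    \sum_(k | P k) \sum_(k' | P k') perm_cov k k'.
  under eq_bigr => p _ do rewrite /sqnorm dotv_suml; rewrite exchange_big.
  apply: eq_bigr => k _; under eq_bigr => p _ do rewrite dotv_sumr.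
  by rewrite exchange_big.
rewrite mulr_sumr (eq_bigr (fun _ => nperm * ((n%:R - 1) * \sum_k sqnorm (v k) +
    (#|P|%:R - 1) * (sqnorm (\sum_k v k) - \sum_k sqnorm (v k))))); last first.
  move=> k Pk; rewrite (bigD1 k) // mulrDr [X in _ + X]mulr_sumr.
  rewrite (eq_bigr (fun _ => nperm * (sqnorm (\sum_k v k) - \sum_k sqnorm (v k)))); last first.
    by move=> k' /andP[_ k'k]; apply: perm_cov_offdiag.
  rewrite sumr_const.
  have -> : #|(fun k' => P k' && (k' != k))| = #|P|.-1.
    by rewrite (cardD1 k P) [k \in P]Pk add1n /=; apply: eq_card => k'; rewrite !inE andbC.
  have P_gt0 : (0 < #|P|)%N by apply/card_gt0P; exists k.
  rewrite -[_ *+ _.-1]mulr_natl -subn1 natrB // mulrAC perm_cov_diag; ring.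
by rewrite sumr_const -mulr_natl; ring.
Qed.

End SamplingWithoutReplacement.

Lemma double_mul_subn_le p n : (p <= n)%N -> (2 * (p * (n - p)) <= n * (n - 1))%N.
Proof. by move=> /subnKC <-; rewrite addKn; case: p => [|p]; case: (n - _)%N => [|q]; nia. Qed.

Lemma Eunif_sqnorm_perm_subset_le (K : realType) (d n : nat)
    (v : 'I_n -> 'rV[K]_d) (P : pred 'I_n) :
  Eunif (fun p : {perm 'I_n} => sqnorm (\sum_(k | P k) v (p k))) <=
  (\sum_k sqnorm (v k)) / 2 + sqnorm (\sum_k v k).
Proof.
have sA_ge0 : 0 <= \sum_k sqnorm (v k) by apply: sumr_ge0 => k _; apply: sqnorm_ge0.
have sB_ge0 := sqnorm_ge0 (\sum_k v k).
have [n_le1|n_gt1] := leqP n 1.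
  (* the factor n (n - 1) of the exact identity vanishes: argue directly *)
  rewrite -[leRHS](Eunif_cst (T := {perm 'I_n})); last by apply/card_gt0P; exists 1%g.
  apply: ler_Eunif => p; move: v P p sA_ge0 sB_ge0; case: n n_le1 => [|[|//]] _ v P p.
    by rewrite !big_ord0 sqnorm0 mul0r addr0.
  rewrite !big_ord1 big_mkcond big_ord1 (ord1 (p ord0)).
  by case: (P ord0); rewrite ?sqnorm0; lra.
have nperm_gt0 : (0 : K) < #|{perm 'I_n}|%:R by rewrite ltr0n; apply/card_gt0P; exists 1%g.
have n_gt0 : (0 : K) < n%:R * (n%:R - 1).
  by rewrite mulr_gt0 // ?ltr0n 1?ltnW // subr_gt0 ltr1n.
rewrite /Eunif mulrC ler_pdivrMr // -(ler_pM2l n_gt0) sum_perm_sqnorm_subset.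
have P_le : (#|P| <= n)%N by rewrite -[n in (_ <= n)%N]card_ord max_card.
have := double_mul_subn_le P_le; rewrite -(ler_nat K) !natrM natrB // natrB 1?ltnW //.
set a := #|P|%:R; set b := n%:R => pairs_le.
have a_le : a <= b by rewrite ler_nat.
have b_ge2 : 2 <= b by rewrite (ler_nat K 2).
have a_ge0 : 0 <= a by [].
set A := \sum_k sqnorm (v k) in sA_ge0 *; set B := sqnorm _ in sB_ge0 *.
have i1 : a * (b - a) * A <= b * (b - 1) / 2 * A by apply: ler_wpM2r => //; lra.
have i2 : a * (a - 1) * B <= b * (b - 1) * B.
  by apply: ler_wpM2r => //; nra.
apply: (le_trans (ler_wpM2l (ltW nperm_gt0) (_ : _ <= b * (b - 1) / 2 * A + b * (b - 1) * B))).
  lra.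
by rewrite le_eqVlt; apply/orP; left; apply/eqP; ring.
Qed.

Lemma big_slot_split (V : nmodType) (C R : nat) (h : 'I_(C * R) -> V) (o : 'I_R) :
  \sum_(i : 'I_(C * R) | (i < o.+1 * C)%N) h i =
  \sum_(i : 'I_(C * R) | (i < o * C)%N) h i + \sum_(s < C) h (slot o s).
Proof.
pose H (i : nat) : V := oapp h 0 (insub i).
have HE (i : 'I_(C * R)) : H i = h i by rewrite /H valK.
have sum_nat p : (p <= C * R)%N ->
    \sum_(i : 'I_(C * R) | (i < p)%N) h i = \sum_(0 <= i < p) H i.
  move=> p_le; rewrite big_mkord (@big_ord_widen_cond _ _ _ p (C * R) xpredT H p_le).
  by apply: eq_bigr => i _; rewrite HE.
have oS_le : (o.+1 * C <= C * R)%N by rewrite mulnC leq_mul2l ltn_ord orbT.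
have o_le : (o * C <= C * R)%N by apply: leq_trans oS_le; rewrite leq_mul2r leqnSn orbT.
rewrite !sum_nat // mulSn addnC (big_cat_nat (leq0n _) (leq_addr C _)) /=; congr (_ + _).
rewrite -{1}[(o * C)%N]add0n big_addn addKn big_mkord.
by apply: eq_bigr => s _; rewrite addnC -HE.
Qed.

Lemma mean_subr (K : fieldType) (V : lmodType K) (C : nat) (x : V) (a : K) (u : 'I_C -> V) :
  C%:R != 0 :> K -> C%:R^-1 *: \sum_(s < C) (x - a *: u s) = x - (a / C%:R) *: \sum_s u s.
Proof.
move=> C0; rewrite sumrB sumr_const card_ord -scaler_nat -scaler_sumr scalerBr.
by rewrite !scalerA mulVf // scale1r mulrC.
Qed.

Section StarSequences.
Variables (K : realType) (d N C R : nat).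
Local Notation vec := 'rV[K]_d.
Local Notation M := (C * R)%N.
Variables (F : 'I_M -> 'I_N -> vec -> K) (xs : vec) (gamma eta L : K).
Hypothesis F_smooth : forall m j, Lsmooth L (F m j).

Let F_diff m j z : differentiable (F m j) z.
Proof. by case: (F_smooth m j). Qed.

Local Notation g m := (grad (fm F m) xs).

Lemma grad_fm m z : grad (fm F m) z = N%:R^-1 *: \sum_j grad (F m j) z.
Proof. exact: grad_scaled_sum. Qed.

Lemma sum_grad_data m : \sum_j grad (F m j) xs = N%:R *: g m.
Proof.
have [N0|N_gt0] := posnP N; last by rewrite grad_fm scalerA mulfV ?scale1r // pnatr_eq0 -lt0n.
have -> : (N%:R : K) = 0 by rewrite N0.
by rewrite scale0r big1 // => -[j j_lt]; exfalso; move: j_lt; rewrite N0.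
Qed.

Definition prefix_grad_sum (p : {perm 'I_M}) (r : nat) : vec :=
  \sum_(i : 'I_M | (i < r * C)%N) g (p i).

Lemma x_round_closed w r : (0 < C)%N -> (r <= R)%N ->
  x_round F xs gamma w r = xs - (gamma * N%:R / C%:R) *: prefix_grad_sum w.1 r.
Proof.
move=> C_gt0; elim: r => [|r IH] r_le /=.
  by rewrite /prefix_grad_sum big_pred0 ?scaler0 ?subr0.
case: insubP => [i0 _ i0E|]; last by rewrite r_le.
have data_sum m (p : {perm 'I_N}) : \sum_(k < N | (k < N)%N) grad (F m (p k)) xs = N%:R *: g m.
  by rewrite -sum_grad_data (eq_bigl _ _ (fun k => ltn_ord k)) [RHS](reindex_inj (@perm_inj _ p)).
under eq_bigr => s _ do rewrite /x_inner data_sum scalerA.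
rewrite mean_subr ?pnatr_eq0 -?lt0n // IH ?(ltnW r_le) // -i0E /prefix_grad_sum big_slot_split.
by rewrite scalerDr opprD addrA.
Qed.

Lemma y_round_closed w r : (r <= R)%N ->
  y_round F xs eta w r = xs - (eta / C%:R) *: prefix_grad_sum w.1 r.
Proof.
elim: r => [|r IH] r_le /=.
  by rewrite /prefix_grad_sum big_pred0 ?scaler0 ?subr0.
case: insubP => [i0 _ i0E|]; last by rewrite r_le.
rewrite IH ?(ltnW r_le) // -i0E /prefix_grad_sum big_slot_split.
by rewrite scalerA scalerDr opprD addrA.
Qed.

Hypothesis L_ge0 : 0 <= L.

Lemma bregman_fm_le m x : bregman (fm F m) x xs <= L / 2 * sqnorm (x - xs).
Proof.
rewrite /fm bregman_scaled_sum => [|j]; last exact: F_diff.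
have [N0|N_gt0] := posnP N.
  have -> : (N%:R : K) = 0 by rewrite N0.
  by rewrite invr0 mul0r mulr_ge0 ?divr_ge0 ?sqnorm_ge0.
rewrite mulrC ler_pdivrMr ?ltr0n //.
apply: le_trans (ler_sum _ (fun j _ => bregman_le_sqnorm x xs (F_smooth m j))) _.
by rewrite sumr_const card_ord mulr_natr.
Qed.

Hypothesis xs_min : forall y, ftot F xs <= ftot F y.

Lemma sum_grad_fm_eq0 : \sum_m g m = 0.
Proof.
have fm_diff m z : differentiable (fm F m) z.
  exact: differentiable_scaled_sum (fun j => F_diff m j z).
have := grad_eq0_at_min (fun z => differentiable_scaled_sum _ (fun m => fm_diff m z)) xs_min.
rewrite grad_scaled_sum // => /eqP; rewrite scaler_eq0 invr_eq0 pnatr_eq0.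
case/orP=> [/eqP M0|/eqP //].
by rewrite big1 // => -[m m_lt]; exfalso; move: m_lt; rewrite M0.
Qed.

Lemma Eunif_data_prefix_le m (j : nat) :
  Eunif (fun p : {perm 'I_N} => sqnorm (\sum_(k < N | (k < j)%N) grad (F m (p k)) xs)) <=
  (\sum_k sqnorm (grad (F m k) xs)) / 2 + N%:R ^+ 2 * sqnorm (g m).
Proof.
have := Eunif_sqnorm_perm_subset_le (fun k => grad (F m k) xs) (fun k : 'I_N => (k < j)%N).
by rewrite sum_grad_data sqnormZ.
Qed.

Hypotheses (gamma_gt0 : 0 < gamma) (eta_gt0 : 0 < eta).

Lemma sigt2_ge0 : 0 <= sigt2 F xs.
Proof. by rewrite mulr_ge0 ?sumr_ge0 // => m _; apply: sqnorm_ge0. Qed.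

Lemma Eunif_prefix_grad_sum_le r : (0 < M)%N ->
  Eunif (fun p : {perm 'I_M} => sqnorm (prefix_grad_sum p r)) <= M%:R / 2 * sigt2 F xs.
Proof.
move=> M_gt0; rewrite [leRHS](_ : _ = (\sum_m sqnorm (g m)) / 2); last first.
  by rewrite /sigt2; field; rewrite !pnatr_eq0 -!lt0n andbC -muln_gt0.
have := Eunif_sqnorm_perm_subset_le (fun m => g m) (fun i : 'I_M => (i < r * C)%N).
by rewrite sum_grad_fm_eq0 sqnorm0 addr0.
Qed.

Lemma Eunif_client_data_prefix_le (i : 'I_M) (j : nat) : (0 < N)%N ->
  Eunif (fun w : Omega N C R =>
    sqnorm (\sum_(k < N | (k < j)%N) grad (F (w.1 i) (w.2 (w.1 i) k)) xs)) <=
  N%:R / 2 * sigs2 F xs + N%:R ^+ 2 * sigt2 F xs.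
Proof.
move=> N_gt0; have /andP[C_gt0 R_gt0] : (0 < C)%N && (0 < R)%N.
  by rewrite -muln_gt0; apply: leq_ltn_trans (ltn_ord i).
rewrite Eunif_pair; apply: le_trans (ler_Eunif (fun p => _ : _ <= _)) _.
  move=> p; have /= -> := Eunif_ffun_eval
    (fun q : {perm 'I_N} => sqnorm (\sum_(k < N | (k < j)%N) grad (F (p i) (q k)) xs)) (p i).
  exact: Eunif_data_prefix_le.
have /= -> := Eunif_perm_eval
  (fun m => (\sum_k sqnorm (grad (F m k) xs)) / 2 + N%:R ^+ 2 * sqnorm (g m)) i.
rewrite big_split /= -mulr_suml -mulr_sumr /sigs2 /sigt2.
rewrite le_eqVlt; apply/orP; left; apply/eqP; field.
by rewrite !pnatr_eq0 -!lt0n R_gt0 C_gt0 N_gt0.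
Qed.

Lemma bregman_data_star_le w (r : 'I_R) (s : 'I_C) (j : 'I_N) :
  let m := cohort w r s in
  bregman (F m (dperm w m j)) (x_inner F xs gamma w (x_round F xs gamma w r) m j) xs <=
  L * (gamma * N%:R / C%:R) ^+ 2 * sqnorm (prefix_grad_sum w.1 r) +
  L * gamma ^+ 2 * sqnorm (\sum_(k < N | (k < j)%N) grad (F m (dperm w m k)) xs).
Proof.
have C_gt0 : (0 < C)%N by apply: leq_ltn_trans (ltn_ord s).
apply: le_trans (bregman_le_sqnorm _ _ (F_smooth _ _)) _.
rewrite /x_inner x_round_closed ?(ltnW (ltn_ord r)) //.
rewrite addrC !addrA addNr add0r -opprD sqnormN.
have L2_ge0 : 0 <= L / 2 by rewrite divr_ge0.
apply: le_trans (ler_wpM2l L2_ge0 (sqnormD_le _ _)) _.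
by rewrite !sqnormZ; lra.
Qed.

Lemma sigmaDS_bound (r : 'I_R) (s : 'I_C) (j : 'I_N) :
  sigmaDS F xs gamma r s j <=
    L * ((C * R)%:R * (N ^ 2)%:R / (2 * (C ^ 2)%:R) + 2 * (N ^ 2)%:R) * sigt2 F xs
    + L * N%:R / 2 * sigs2 F xs.
Proof.
have C_gt0 : (0 < C)%N by apply: leq_ltn_trans (ltn_ord s).
have N_gt0 : (0 < N)%N by apply: leq_ltn_trans (ltn_ord j).
have M_gt0 : (0 < M)%N by apply: leq_ltn_trans (ltn_ord (slot r s)).
have pointwise w := bregman_data_star_le w r s j.
rewrite /sigmaDS; apply: le_trans (ler_wpM2l _ (ler_Eunif pointwise)) _.
  by rewrite invr_ge0 sqr_ge0.
rewrite EunifD !EunifZ (Eunif_fst (fun p => sqnorm (prefix_grad_sum p r))); last first.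
  by apply/card_gt0P; exists [ffun=> 1%g].
set ES := Eunif (fun p : {perm 'I_M} => sqnorm (prefix_grad_sum p r)).
set ET := Eunif _.
have ES_le : ES <= M%:R / 2 * sigt2 F xs := Eunif_prefix_grad_sum_le r M_gt0.
have ET_le : ET <= N%:R / 2 * sigs2 F xs + N%:R ^+ 2 * sigt2 F xs.
  exact: Eunif_client_data_prefix_le.
have -> : gamma ^- 2 * (L * (gamma * N%:R / C%:R) ^+ 2 * ES + L * gamma ^+ 2 * ET) =
    L * (N%:R / C%:R) ^+ 2 * ES + L * ET.
  by field; rewrite pnatr_eq0 -lt0n C_gt0 gt_eqF.
have -> : L * (M%:R * (N ^ 2)%:R / (2 * (C ^ 2)%:R) + 2 * (N ^ 2)%:R) * sigt2 F xs +
      L * N%:R / 2 * sigs2 F xs =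
    L * (N%:R / C%:R) ^+ 2 * (M%:R / 2 * sigt2 F xs) +
    L * (N%:R / 2 * sigs2 F xs + N%:R ^+ 2 * sigt2 F xs) + L * N%:R ^+ 2 * sigt2 F xs.
  by rewrite !natrX; field; rewrite pnatr_eq0 -lt0n C_gt0.
have := ler_wpM2l (mulr_ge0 L_ge0 (sqr_ge0 (N%:R / C%:R))) ES_le.
have := ler_wpM2l L_ge0 ET_le.
have := mulr_ge0 (mulr_ge0 L_ge0 (sqr_ge0 (N%:R : K))) sigt2_ge0.
lra.
Qed.

Lemma sigmaCS_bound (m : 'I_M) (r : nat) : (r <= R)%N ->
  sigmaCS F xs eta m r <= L * (C * R)%:R / (2 * (C ^ 2)%:R) * sigt2 F xs.
Proof.
move=> r_le; have M_gt0 : (0 < M)%N by apply: leq_ltn_trans (ltn_ord m).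
have C_gt0 : (0 < C)%N by move: M_gt0; rewrite muln_gt0 => /andP[].
have pointwise w : bregman (fm F m) (y_round F xs eta w r) xs <=
    L / 2 * (eta / C%:R) ^+ 2 * sqnorm (prefix_grad_sum w.1 r).
  apply: le_trans (bregman_fm_le m _) _.
  by rewrite y_round_closed // addrC addrA addNr add0r sqnormN sqnormZ mulrA.
rewrite /sigmaCS; apply: le_trans (ler_wpM2l _ (ler_Eunif pointwise)) _.
  by rewrite invr_ge0 sqr_ge0.
rewrite EunifZ (Eunif_fst (fun p => sqnorm (prefix_grad_sum p r))); last first.
  by apply/card_gt0P; exists [ffun=> 1%g].
set ES := Eunif (fun p : {perm 'I_M} => sqnorm (prefix_grad_sum p r)).
have ES_le : ES <= M%:R / 2 * sigt2 F xs := Eunif_prefix_grad_sum_le r M_gt0.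
have -> : eta ^- 2 * (L / 2 * (eta / C%:R) ^+ 2 * ES) = L / (2 * C%:R ^+ 2) * ES.
  by field; rewrite pnatr_eq0 -lt0n C_gt0 gt_eqF.
have L2C_ge0 : 0 <= L / (2 * C%:R ^+ 2) by rewrite divr_ge0 ?mulr_ge0 ?sqr_ge0.
apply: le_trans (ler_wpM2l L2C_ge0 ES_le) _.
rewrite natrX [leRHS](_ : _ = 2 * (L / (2 * C%:R ^+ 2) * (M%:R / 2 * sigt2 F xs))).
  by rewrite ler_peMl ?ler1n // mulr_ge0 // mulr_ge0 ?sigt2_ge0 // divr_ge0.
by field; rewrite pnatr_eq0 -lt0n C_gt0.
Qed.

End StarSequences.

Theorem lemma4 (K : realType) (d N C R : nat)
  (F : 'I_(C * R) -> 'I_N -> 'rV[K]_d -> K) (L gamma eta : K) (xs : 'rV[K]_d)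
  (hgamma : 0 < gamma) (heta : 0 < eta)
  (hsmooth : forall m j, Lsmooth L (F m j))
  (hmin : forall y, ftot F xs <= ftot F y) :
  (forall (r : 'I_R) (s : 'I_C) (j : 'I_N),
     sigmaDS F xs gamma r s j <=
       L * ((C * R)%:R * (N ^ 2)%:R / (2 * (C ^ 2)%:R) + 2 * (N ^ 2)%:R)
         * sigt2 F xs
       + L * N%:R / 2 * sigs2 F xs) /\
  (forall (m : 'I_(C * R)) (r : nat), (r <= R)%N ->
     sigmaCS F xs eta m r <= L * (C * R)%:R / (2 * (C ^ 2)%:R) * sigt2 F xs).
Proof.
have [L_ge0|L_lt0] := leP 0 L.
  by split=> [r s j|m r r_le]; [exact: sigmaDS_bound | exact: sigmaCS_bound].
(* a negative smoothness constant forces every vector to vanish, so the bounds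
   for the constant 0 apply and both variances at x_* are 0 *)
have vanish m j := Lsmooth_neg_trivial (hsmooth m j) L_lt0.
have smooth0 m j := Lsmooth0_of_neg (hsmooth m j) L_lt0.
have sigt2_0 : sigt2 F xs = 0.
  rewrite /sigt2 big1 ?mulr0 // => m _.
  by rewrite (grad_fm hsmooth) big1 ?scaler0 ?sqnorm0 // => j _; apply: vanish.
have sigs2_0 : sigs2 F xs = 0.
  rewrite /sigs2 big1 ?mulr0 // => m _.
  by rewrite big1 // => j _; rewrite (vanish m j (grad (F m j) xs)) sqnorm0.
rewrite sigt2_0 sigs2_0 !mulr0 addr0; split=> [r s j|m r r_le].
  have := sigmaDS_bound smooth0 (lexx 0) hmin hgamma r s j.
  by rewrite sigt2_0 sigs2_0 !mulr0 addr0.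
by have := sigmaCS_bound smooth0 (lexx 0) hmin heta m r_le; rewrite sigt2_0 mulr0.
Qed.
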